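(* Let $R=(\mathbb{C},\mathbb{C}^4,\mathbb{C};u_0,\dots,u_3,v_0,\dots,v_3)$ be a representation of $\mathbf{Q}$ with dimension vector $(1,4,1)$. If $R$ is globally injective, then $R$ is not locally surjective if and only if $R$ has a subrepresentation of dimension vector $(1,b,0)$ for some $b\in\{0,1,2,3,4\}$. If $R$ is globally surjective, then $R$ is not locally injective if and only if $R$ has a subrepresentation of dimension vector $(1,b,0)$ for some $b\in\{0,1,2,3,4\}$.
   Context: The quiver $\mathbf{Q}$ has vertices $-1,0,1$, arrows $\eta_0,\dots,\eta_3:-1\to0$, $\phi_0,\dots,\phi_3:0\to1$ and relations $\phi_i\eta_j+\phi_j\eta_i=0$; a representation consists of vector spaces $V_{-1},V_0,V_1$ and linear maps $u_i:V_{-1}\to V_0$, $v_i:V_0\to V_1$ with $v_iu_j+v_ju_i=0$. $R$ is globally injective (resp. surjective) if $\sum\lambda_iu_i$ is injective (resp. $\sum\lambda_iv_i$ is surjective) for all $\lambda\in\mathbb{C}^4\setminus\{0\}$; locally injective (resp. surjective) if this holds for all $[\lambda]\in\mathbb{P}^3$ outside a closed subset of codimension at least 2. *)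

From HB Require Import structures.
From mathcomp Require Import all_boot all_algebra.
From mathcomp Require Import complex Rstruct.
From mathcomp Require Import mpoly.
Set Implicit Arguments. Unset Strict Implicit. Unset Printing Implicit Defensive.
Import GRing.Theory Num.Theory.
Local Open Scope ring_scope.

Definition C : numClosedFieldType := complex Rdefinitions.R.

(* A point of P^3 is represented by a nonzero vector of C^4 (homogeneous
   coordinates); subsets of P^3 are predicates on C^4 considered only on
   nonzero vectors (all sets below are scaling-invariant by construction). *)
Definition pt := 'I_4 -> C.
Definition nonzero (x : pt) : Prop := exists i, x i != 0.
Definition pset := pt -> Prop.

Definition zclosed (Z : pset) : Prop :=
  exists S : {mpoly C[4]} -> Prop,
    (forall p, S p -> exists d : nat, p \is d.-homog) /\
    (forall x, nonzero x -> (Z x <-> forall p, S p -> p.@[x] = 0)).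

Definition psub (Y Z : pset) : Prop := forall x, nonzero x -> Y x -> Z x.
Definition pstrict (Y Z : pset) : Prop :=
  psub Y Z /\ exists x, nonzero x /\ Z x /\ ~ Y x.

Definition irreducible_closed (Y : pset) : Prop :=
  [/\ zclosed Y, (exists x, nonzero x /\ Y x) &
      forall A B, zclosed A -> zclosed B ->
        psub Y (fun x => A x \/ B x) -> psub Y A \/ psub Y B].

(* codimension of Y in P^3 is >= k : there is a strictly increasing chain
   Y = Y_0 < Y_1 < ... < Y_k of irreducible closed subsets of P^3 *)
Definition irr_codim_ge (k : nat) (Y : pset) : Prop :=
  exists c : nat -> pset,
    [/\ psub Y (c 0%N), psub (c 0%N) Y,
        (forall i, (i <= k)%N -> irreducible_closed (c i)) &
        (forall i, (i < k)%N -> pstrict (c i) (c i.+1))].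

(* A closed set Z has codimension >= k iff every irreducible component
   (equivalently every irreducible closed subset) of Z has codim >= k. *)
Definition codim_ge (k : nat) (Z : pset) : Prop :=
  forall Y, irreducible_closed Y -> psub Y Z -> irr_codim_ge k Y.

(* Vector spaces V_{-1} = C^nm, V_0 = C^n0, V_1 = C^n1, linear maps written
   in row-vector convention: u_i : w |-> w *m u i, v_i : w |-> w *m v i.
   Hence the composite v_i u_j is the matrix u j *m v i. *)
Definition is_rep (nm n0 n1 : nat)
  (u : 'I_4 -> 'M[C]_(nm, n0)) (v : 'I_4 -> 'M[C]_(n0, n1)) : Prop :=
  forall i j : 'I_4, u j *m v i + u i *m v j = 0.

Definition lincomb (m n : nat) (x : pt) (f : 'I_4 -> 'M[C]_(m, n)) : 'M[C]_(m, n) :=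
  \sum_(i < 4) x i *: f i.

Definition injective_at (nm n0 : nat) (u : 'I_4 -> 'M[C]_(nm, n0)) (x : pt) : Prop :=
  injective (fun w : 'rV[C]_nm => w *m lincomb x u).

Definition surjective_at (n0 n1 : nat) (v : 'I_4 -> 'M[C]_(n0, n1)) (x : pt) : Prop :=
  forall y : 'rV[C]_n1, exists w : 'rV[C]_n0, w *m lincomb x v = y.

Definition globally_injective nm n0 (u : 'I_4 -> 'M[C]_(nm, n0)) : Prop :=
  forall x, nonzero x -> injective_at u x.
Definition globally_surjective n0 n1 (v : 'I_4 -> 'M[C]_(n0, n1)) : Prop :=
  forall x, nonzero x -> surjective_at v x.

Definition locally_injective nm n0 (u : 'I_4 -> 'M[C]_(nm, n0)) : Prop :=
  exists Z, [/\ zclosed Z, codim_ge 2 Z &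
                forall x, nonzero x -> ~ Z x -> injective_at u x].
Definition locally_surjective n0 n1 (v : 'I_4 -> 'M[C]_(n0, n1)) : Prop :=
  exists Z, [/\ zclosed Z, codim_ge 2 Z &
                forall x, nonzero x -> ~ Z x -> surjective_at v x].

Definition has_subrep nm n0 n1
  (u : 'I_4 -> 'M[C]_(nm, n0)) (v : 'I_4 -> 'M[C]_(n0, n1)) (a b c : nat) : Prop :=
  exists (Wm : 'M[C]_nm) (W0 : 'M[C]_n0) (W1 : 'M[C]_n1),
    [/\ \rank Wm = a, \rank W0 = b, \rank W1 = c,
        (forall i, (Wm *m u i <= W0)%MS) &
        (forall i, (W0 *m v i <= W1)%MS)].

(* Global injectivity makes the rows u_0, ..., u_3 a basis of C^4.  A
   (1,b,0)-subrepresentation amounts to u_j v_i = 0 for all i, j, hence exists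
   iff v = 0, and then surjectivity fails at every point of P^3.  Otherwise
   some u_j v_i is nonzero and the degeneracy locus {x | sum_k x_k v_k = 0}
   lies in the hyperplane H = {x | sum_k x_k u_j v_k = 0}.  H contains e_j,
   where v_j is nonzero because u_i v_j = - u_j v_i, so every irreducible
   closed Y in the locus sits in a chain Y < H < P^3: the locus has
   codimension at least 2.  The globally surjective case is the transpose. *)

From mathcomp Require Import all_boot all_algebra.
From mathcomp Require Import complex Rstruct mpoly.
From Stdlib Require Import Classical.
Set Implicit Arguments. Unset Strict Implicit. Unset Printing Implicit Defensive.
Import GRing.Theory Num.Theory.
Local Open Scope ring_scope.

Lemma nonzeroN (x : pt) : ~ nonzero x -> forall i, x i = 0.
Proof. by move=> nz i; apply: NNPP => xi; apply: nz; exists i; apply/eqP. Qed.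

Definition basis_pt (i : 'I_4) : pt := fun k => (k == i)%:R.

Lemma nonzero_basis_pt i : nonzero (basis_pt i).
Proof. by exists i; rewrite /basis_pt eqxx oner_eq0. Qed.

Lemma lincomb_entry m n (g : 'I_4 -> 'M[C]_(m, n)) x r s :
  lincomb x g r s = \sum_(k < 4) g k r s * x k.
Proof. by rewrite /lincomb summxE; apply: eq_bigr => k _; rewrite mxE mulrC. Qed.

Lemma lincomb_basis_pt m n (g : 'I_4 -> 'M[C]_(m, n)) i : lincomb (basis_pt i) g = g i.
Proof.
rewrite /lincomb (bigD1 i) //= big1 => [|k /negbTE ki]; last by rewrite /basis_pt ki scale0r.
by rewrite /basis_pt eqxx scale1r addr0.
Qed.

Lemma lincomb_line m n (g : 'I_4 -> 'M[C]_(m, n)) (a b : pt) t :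
  lincomb (fun k => a k + t * (b k - a k)) g = lincomb a g + t *: (lincomb b g - lincomb a g).
Proof.
rewrite /lincomb -sumrB scaler_sumr -big_split; apply: eq_bigr => k _ /=.
by rewrite scalerDl mulrBr scalerBl scalerBr !scalerA.
Qed.

Lemma lincomb_zero m n (g : 'I_4 -> 'M[C]_(m, n)) x : (forall k, g k = 0) -> lincomb x g = 0.
Proof. by move=> g0; rewrite /lincomb big1 // => k _; rewrite g0 scaler0. Qed.

Lemma mulmx_lincomb p m n (A : 'M[C]_(p, m)) (g : 'I_4 -> 'M[C]_(m, n)) x :
  A *m lincomb x g = lincomb x (fun k => A *m g k).
Proof. by rewrite /lincomb mulmx_sumr; apply: eq_bigr => k _; rewrite scalemxAr. Qed.

Lemma trmx_lincomb m n (g : 'I_4 -> 'M[C]_(m, n)) x :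
  (lincomb x g)^T = lincomb x (fun k => (g k)^T).
Proof.
apply/matrixP => r s; rewrite mxE !lincomb_entry.
by apply: eq_bigr => k _; rewrite mxE.
Qed.

Definition zero_locus m n (g : 'I_4 -> 'M[C]_(m, n)) : pset := fun x => lincomb x g = 0.

Definition lin_mpoly (c : 'I_4 -> C) : {mpoly C[4]} := \sum_(i < 4) c i *: 'X_i.

Lemma lin_mpoly_homog c : lin_mpoly c \is 1.-homog.
Proof.
apply: rpred_sum => i _; apply: dhomogZ.
by rewrite dhomogX; apply/eqP; exact: mdeg1.
Qed.

Lemma meval_lin_mpoly c (x : pt) : (lin_mpoly c).@[x] = \sum_(i < 4) c i * x i.
Proof.
rewrite /lin_mpoly (big_morph _ (mevalD x) (meval0 x)).
by apply: eq_bigr => i _; rewrite mevalZ mevalXU.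
Qed.

Lemma zclosed_zero_locus m n (g : 'I_4 -> 'M[C]_(m, n)) : zclosed (zero_locus g).
Proof.
exists (fun p => exists r s, p = lin_mpoly (fun k => g k r s)); split.
  by move=> _ [r [s ->]]; exists 1%N; exact: lin_mpoly_homog.
move=> x _; split => [gx0 _ [r [s ->]] | vanish].
  by rewrite meval_lin_mpoly -lincomb_entry gx0 mxE.
apply/matrixP => r s; rewrite lincomb_entry mxE -meval_lin_mpoly.
by apply: vanish; exists r, s.
Qed.

Lemma meval_line_poly (p : {mpoly C[4]}) (a d : pt) :
  exists g : {poly C}, forall t, g.[t] = p.@[fun i => a i + t * d i].
Proof.
exists (\sum_(m <- msupp p) (p@_m)%:P * \prod_(i < 4) ((a i)%:P + 'X * (d i)%:P) ^+ m i).
move=> t; rewrite mevalE horner_sum; apply: eq_bigr => m _.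
rewrite hornerM hornerC horner_prod; congr (_ * _); apply: eq_bigr => i _.
by rewrite horner_exp hornerD hornerC hornerM hornerX hornerC.
Qed.

Lemma poly_eq0_of_horner (R : numDomainType) (g : {poly R}) : (forall t, g.[t] = 0) -> g = 0.
Proof.
move=> g0; apply: contra_eq (ltnn (size g)) => gN0.
have roots_g : all (root g) [seq i%:R | i <- iota 0 (size g)].
  by apply/allP => _ /mapP[i _ ->]; rewrite /root g0.
have uniq_roots : uniq [seq i%:R : R | i <- iota 0 (size g)].
  by rewrite map_inj_uniq ?iota_uniq // => i j /eqP; rewrite eqr_nat => /eqP.
by have := max_poly_roots gN0 roots_g uniq_roots; rewrite size_map size_iota => ->.
Qed.

Lemma zclosed_outside (A : pset) (S : {mpoly C[4]} -> Prop) a :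
  (forall x, nonzero x -> (A x <-> forall p, S p -> p.@[x] = 0)) ->
  nonzero a -> ~ A a -> exists2 p, S p & p.@[a] != 0.
Proof.
move=> hA nza nAa; apply: NNPP => noP; apply/nAa/hA => // p Sp.
by apply: NNPP => pa; apply: noP; exists p => //; apply/eqP.
Qed.

Definition affine_closed (W : pset) : Prop :=
  forall a b t, W a -> W b -> W (fun i => a i + t * (b i - a i)).

Lemma affine_closed_irreducible (W : pset) :
  zclosed W -> (exists x, nonzero x /\ W x) -> affine_closed W -> irreducible_closed W.
Proof.
move=> cW neW affW; split => // A B [SA [_ hA]] [SB [_ hB]] W_AB.
case: (classic (psub W A)) => [|nWA]; [by left | right].
have [a [nza [Wa nAa]]] : exists a, nonzero a /\ W a /\ ~ A a.
  by apply: NNPP => noa; apply: nWA => x nzx Wx; apply: NNPP => nAx; apply: noa; exists x.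
move=> b nzb Wb; apply: NNPP => nBb.
have [p Sp pa] := zclosed_outside hA nza nAa.
have [q Sq qb] := zclosed_outside hB nzb nBb.
pose line t : pt := fun i => a i + t * (b i - a i).
have [g Hg] := meval_line_poly p a (fun i => b i - a i).
have [h Hh] := meval_line_poly q a (fun i => b i - a i).
have [k ak] := nza.
(* r vanishes at the parameters where the line passes through the origin. *)
pose r : {poly C} := (a k)%:P + 'X * (b k - a k)%:P.
have Hr t : r.[t] = line t k by rewrite hornerD hornerC hornerM hornerX hornerC.
have : g * h * r = 0.
  apply: poly_eq0_of_horner => t; rewrite !hornerM Hg Hh Hr.
  have [nz|/nonzeroN -> ] := classic (nonzero (line t)); last by rewrite mulr0.
  case: (W_AB _ nz (affW a b t Wa Wb)) => [/(hA _ nz) | /(hB _ nz)] van.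
    by rewrite (van p Sp) !mul0r.
  by rewrite (van q Sq) mulr0 mul0r.
have line0 : line 0 =1 a by move=> i; rewrite /line mul0r addr0.
have line1 : line 1 =1 b by move=> i; rewrite /line mul1r addrC subrK.
move/eqP; rewrite !mulf_eq0 => /orP[/orP[]|] /eqP eq0.
- by move: pa; rewrite -(meval_eq p line0) -Hg eq0 horner0 eqxx.
- by move: qb; rewrite -(meval_eq q line1) -Hh eq0 horner0 eqxx.
- by move: ak; rewrite -line0 -Hr eq0 horner0 eqxx.
Qed.

Lemma irreducible_whole : irreducible_closed (fun _ => True).
Proof.
apply: affine_closed_irreducible => //.
- by exists (fun _ => False); split => // x _; split => // _ p [].
- by exists (basis_pt 0); split => //; exact: nonzero_basis_pt.
Qed.

Lemma irreducible_zero_locus m n (g : 'I_4 -> 'M[C]_(m, n)) :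
  (exists x, nonzero x /\ zero_locus g x) -> irreducible_closed (zero_locus g).
Proof.
move=> ne; apply: affine_closed_irreducible (zclosed_zero_locus g) ne _.
by move=> a b t ga gb; rewrite /zero_locus lincomb_line ga gb subrr scaler0 addr0.
Qed.

Lemma codim_geS_proper k (Z : pset) : codim_ge k.+1 Z -> ~ psub (fun _ => True) Z.
Proof.
move=> codimZ full; have [c [Zc0 _ _ chain]] := codimZ _ irreducible_whole full.
by have [_ [x [nzx [_ []]]]] := chain 0%N isT; apply: Zc0.
Qed.

Lemma codim_ge2_sub_zero_locus (Z : pset) m n (g : 'I_4 -> 'M[C]_(m, n)) e f :
  nonzero e -> ~ zero_locus g e -> nonzero f -> zero_locus g f -> ~ Z f ->
  psub Z (zero_locus g) -> codim_ge 2 Z.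
Proof.
move=> nze ge nzf gf nZf ZL Y irrY YZ.
exists (fun i => match i with 0%N => Y | 1%N => zero_locus g | _ => fun _ => True end).
split => //.
- case=> [|[|[|i]]] // _; last exact: irreducible_whole.
  by apply: irreducible_zero_locus; exists f.
- case=> [|[|i]] // _; split.
  + by move=> x nzx /(YZ _ nzx) /(ZL _ nzx).
  + by exists f; split => //; split => // /(YZ _ nzf).
  + by [].
  + by exists e.
Qed.

(* [locally_injective u] and [locally_surjective v] unfold to
   [holds_locally (injective_at u)] and [holds_locally (surjective_at v)]. *)
Definition holds_locally (P : pt -> Prop) : Prop :=
  exists Z, [/\ zclosed Z, codim_ge 2 Z & forall x, nonzero x -> ~ Z x -> P x].

Lemma holds_locally_nowhere (P : pt -> Prop) :
  (forall x, nonzero x -> ~ P x) -> ~ holds_locally P.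
Proof.
move=> nP [Z [_ codimZ PZ]]; apply: codim_geS_proper codimZ _ => x nzx _.
by apply: NNPP => /(PZ x nzx); apply: nP.
Qed.

Lemma holds_locally_ext (P Q : pt -> Prop) :
  (forall x, nonzero x -> P x <-> Q x) -> holds_locally P -> holds_locally Q.
Proof.
by move=> PQ [Z [cZ codimZ PZ]]; exists Z; split => // x nzx /(PZ x nzx) /(PQ x nzx).
Qed.

Lemma injective_at_row_free nm n0 (u : 'I_4 -> 'M[C]_(nm, n0)) x :
  injective_at u x <-> row_free (lincomb x u).
Proof.
split=> [inj | free_A]; last exact: row_free_inj free_A.
rewrite -kermx_eq0; apply/eqP/row_matrixP => i; rewrite row0; apply: inj.
by rewrite /= mul0mx -row_mul mulmx_ker row0.
Qed.

Lemma surjective_at_row_full n0 n1 (v : 'I_4 -> 'M[C]_(n0, n1)) x :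
  surjective_at v x <-> row_full (lincomb x v).
Proof.
split=> [surj | /row_fullP [B BA] y].
  by rewrite -sub1mx; apply/row_subP => i; have [w <-] := surj (row i 1%:M); exact: submxMl.
by exists (y *m B); rewrite -mulmxA BA mulmx1.
Qed.

Lemma injective_at_rV n0 (u : 'I_4 -> 'M[C]_(1, n0)) x :
  injective_at u x <-> lincomb x u != 0.
Proof. by rewrite injective_at_row_free /row_free rank_rV; case: (_ != 0). Qed.

Lemma surjective_at_cV n0 (v : 'I_4 -> 'M[C]_(n0, 1)) x :
  surjective_at v x <-> lincomb x v != 0.
Proof.
by rewrite surjective_at_row_full /row_full -mxrank_tr rank_rV trmx_eq0; case: (_ != 0).
Qed.

Lemma injective_at_tr n0 n1 (v : 'I_4 -> 'M[C]_(n0, n1)) x :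
  injective_at (fun k => (v k)^T) x <-> surjective_at v x.
Proof.
by rewrite injective_at_row_free surjective_at_row_full -trmx_lincomb /row_free mxrank_tr.
Qed.

Lemma surjective_at_tr nm n0 (u : 'I_4 -> 'M[C]_(nm, n0)) x :
  surjective_at (fun k => (u k)^T) x <-> injective_at u x.
Proof.
by rewrite injective_at_row_free surjective_at_row_full -trmx_lincomb /row_full mxrank_tr.
Qed.

Lemma free_rows_mul_eq0 p (r : 'I_4 -> 'rV[C]_4) (M : 'M[C]_(4, p)) :
  (forall x, nonzero x -> lincomb x r != 0) -> (forall j, r j *m M = 0) -> M = 0.
Proof.
move=> r_free rM0; pose U := \matrix_j r j.
have mulU (w : 'rV_4) : w *m U = lincomb (fun j => w 0 j) r.
  by rewrite mulmx_sum_row; apply: eq_bigr => j _; rewrite rowK.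
have U_unit : U \in unitmx.
  rewrite -row_free_unit -kermx_eq0; apply/eqP/row_matrixP => i; rewrite row0.
  have /eqP := congr1 (row i) (mulmx_ker U); rewrite row_mul mulU row0.
  set w := row i (kermx U).
  have [/r_free/negP nz /nz // | /nonzeroN w0 _] := classic (nonzero (fun j => w 0 j)).
  by apply/rowP => j; rewrite w0 mxE.
have UM0 : U *m M = 0 by apply/row_matrixP => j; rewrite row_mul rowK rM0 row0.
by rewrite -(mulKmx U_unit M) UM0 mulmx0.
Qed.

Lemma has_subrep_1b0P n0 n1 (u : 'I_4 -> 'M[C]_(1, n0)) (v : 'I_4 -> 'M[C]_(n0, n1)) :
  (exists b, (b <= n0)%N /\ has_subrep u v 1 b 0) <-> forall i j, u j *m v i = 0.
Proof.
split=> [[b [_ [Wm [W0 [W1 [rkWm _ rkW1 uW vW]]]]]] i j | uv0].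
  have W1_0 : W1 = 0 by apply/eqP; rewrite -mxrank_eq0 rkW1.
  have Wm_unit : Wm \in unitmx by rewrite -row_free_unit /row_free rkWm.
  have /submxP [D ->] : (u j <= W0)%MS.
    by rewrite -(mulKmx Wm_unit (u j)); exact: submx_trans (submxMl _ _) (uW j).
  have /eqP W0v0 : W0 *m v i == 0 by rewrite -submx0 -W1_0.
  by rewrite -mulmxA W0v0 mulmx0.
pose U := \matrix_j u j.
exists (\rank U); split; first exact: rank_leq_col.
exists 1%:M, <<U>>%MS, 0; split.
- exact: mxrank1.
- exact: mxrank_gen.
- exact: mxrank0.
- by move=> i; rewrite mul1mx genmxE -(rowK u i) row_sub.
- move=> i; apply: submx_trans (submxMr (v i) (_ : <<U>> <= U)%MS) _; first by rewrite genmxE.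
  by rewrite submx0; apply/eqP/row_matrixP => j; rewrite row_mul rowK uv0 row0.
Qed.

Section IsRep.
Variables (nm n0 n1 : nat) (u : 'I_4 -> 'M[C]_(nm, n0)) (v : 'I_4 -> 'M[C]_(n0, n1)).
Hypothesis rep_uv : is_rep u v.

Lemma is_rep_swap i j : u i *m v j = - (u j *m v i).
Proof. by apply/eqP; rewrite -addr_eq0 addrC rep_uv. Qed.

Lemma is_rep_diag j : u j *m v j = 0.
Proof.
apply/matrixP => a b; apply/eqP; rewrite mxE.
have /matrixP/(_ a b)/eqP := rep_uv j j.
by rewrite !mxE -mulr2n mulrn_eq0.
Qed.

Lemma is_rep_tr : is_rep (fun k => (v k)^T) (fun k => (u k)^T).
Proof. by move=> i j; rewrite -!trmx_mul -raddfD addrC rep_uv raddf0. Qed.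

End IsRep.

Lemma locally_surjective_of_mul_neq0 n0
    (u : 'I_4 -> 'M[C]_(1, n0)) (v : 'I_4 -> 'M[C]_(n0, 1)) i j :
  is_rep u v -> u j *m v i != 0 -> locally_surjective v.
Proof.
move=> rep_uv /eqP uv_neq0.
exists (zero_locus v); split; first exact: zclosed_zero_locus.
- apply: (@codim_ge2_sub_zero_locus _ _ _ (fun k => u j *m v k) (basis_pt i) (basis_pt j)).
  + exact: nonzero_basis_pt.
  + by rewrite /zero_locus lincomb_basis_pt.
  + exact: nonzero_basis_pt.
  + by rewrite /zero_locus lincomb_basis_pt (is_rep_diag rep_uv).
  + rewrite /zero_locus lincomb_basis_pt => vj0; apply/uv_neq0/eqP.
    by rewrite -oppr_eq0 -(is_rep_swap rep_uv i j) vj0 mulmx0.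
  + by move=> x _ vx; rewrite /zero_locus -mulmx_lincomb vx mulmx0.
- by move=> x _ /eqP; rewrite surjective_at_cV.
Qed.

Lemma not_locally_surjectiveP (u : 'I_4 -> 'M[C]_(1, 4)) (v : 'I_4 -> 'M[C]_(4, 1)) :
  is_rep u v -> globally_injective u ->
  ~ locally_surjective v <-> forall i j, u j *m v i = 0.
Proof.
move=> rep_uv inj_u; split=> [nls i j | uv0].
  by have [//|/(locally_surjective_of_mul_neq0 rep_uv)/nls []] := eqVneq (u j *m v i) 0.
have v0 k : v k = 0.
  by apply: (free_rows_mul_eq0 _ (fun j => uv0 k j)) => x /inj_u /injective_at_rV.
by apply: holds_locally_nowhere => x _; rewrite surjective_at_cV lincomb_zero // eqxx.
Qed.

Theorem mainTheorem9 (u : 'I_4 -> 'M[C]_(1, 4)) (v : 'I_4 -> 'M[C]_(4, 1)) :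
  is_rep u v ->
  (globally_injective u ->
     (~ locally_surjective v <-> exists b : nat, (b <= 4)%N /\ has_subrep u v 1 b 0)) /\
  (globally_surjective v ->
     (~ locally_injective u <-> exists b : nat, (b <= 4)%N /\ has_subrep u v 1 b 0)).
Proof.
move=> rep_uv; rewrite has_subrep_1b0P; split=> [|surj_v].
  exact: not_locally_surjectiveP.
have inj_vT : globally_injective (fun k => (v k)^T).
  by move=> x /surj_v /injective_at_tr.
have locally_dual : locally_surjective (fun k => (u k)^T) <-> locally_injective u.
  by split; apply: holds_locally_ext => x _; rewrite surjective_at_tr.
rewrite -locally_dual (not_locally_surjectiveP (is_rep_tr rep_uv) inj_vT).
split=> uv0 i j; last by rewrite -trmx_mul uv0 trmx0.
by apply: trmx_inj; rewrite trmx_mul trmx0 uv0.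
Qed.
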